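(* Let $0<\alpha<1$ and let $\lambda>0$, $k>0$, $m>0$, $h>0$, $C<D$ (with $D>0$) be constants. Let $$K(\eta)=\eta\left[1-W\!\left(-\eta,-\tfrac{\alpha}{2},1\right)+\frac{m}{h\lambda\Gamma(1-\alpha/2)}\right]\frac{1}{M_{\alpha/2}(\eta)},\quad \eta>0,$$ and let $\tilde\eta$ be the unique positive solution of $K(\eta)=\frac{k}{\lambda^2}\frac{\Gamma(1-\frac{\alpha}{2})}{\Gamma(1+\frac{\alpha}{2})}(D-C)$. Set $$q=\frac{(D-C)\,h}{m+h\lambda\Gamma(1-\frac{\alpha}{2})\left[1-W(-\tilde\eta,-\frac{\alpha}{2},1)\right]}.$$ Consider problem (P2): find $u,s$ with $D^{\alpha}_t u=\lambda^2u_{xx}$ for $0<x<s(t)$, $t>0$; $u_x(0,t)=-\frac{q}{t^{\alpha/2}}$; $u(s(t),t)=C$; $D^{\alpha}s(t)=-k u_x(s(t),t)$ for $t>0$; $s(0)=0$. Consider problem (P3): find $u,s$ with $D^{\alpha}_t u=\lambda^2u_{xx}$ for $0<x<s(t)$, $t>0$; $m\,u_x(0,t)=\frac{h}{t^{\alpha/2}}(u(0,t)-D)$; $u(s(t),t)=C$; $D^{\alpha}s(t)=-k u_x(s(t),t)$ for $t>0$; $s(0)=0$ (with the same $C$). Then problems (P2) and (P3) are equivalent: the solution of (P2) $$u_2(x,t)=C+q\lambda\Gamma(1-\tfrac{\alpha}{2})\left[1-W(-\tilde\mu,-\tfrac{\alpha}{2},1)\right]-q\lambda\Gamma(1-\tfrac{\alpha}{2})\left[1-W\!\left(-\frac{x}{\lambda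 t^{\alpha/2}},-\frac{\alpha}{2},1\right)\right],\quad s_2(t)=\lambda\tilde\mu t^{\alpha/2},$$ where $\tilde\mu$ is the unique positive solution of $\frac{\mu}{M_{\alpha/2}(\mu)}=\frac{kq}{\lambda}\frac{\Gamma(1-\frac{\alpha}{2})^2}{\Gamma(1+\frac{\alpha}{2})}$, coincides with the solution of (P3) $$u_3(x,t)=D-\frac{(D-C)\left[1-W\!\left(-\frac{x}{\lambda t^{\alpha/2}},-\frac{\alpha}{2},1\right)+\frac{m}{h\lambda\Gamma(1-\alpha/2)}\right]}{1-W\!\left(-\tilde\eta,-\frac{\alpha}{2},1\right)+\frac{m}{h\lambda\Gamma(1-\alpha/2)}},\quad s_3(t)=\lambda\tilde\eta t^{\alpha/2};$$ that is, $\tilde\mu=\tilde\eta$, $s_2=s_3$ and $u_2=u_3$.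
   Context: For $0<\alpha<1$, the Caputo fractional derivative of a differentiable $f$ is $D^{\alpha}f(t)=\frac{1}{\Gamma(1-\alpha)}\int_0^t (t-\tau)^{-\alpha}f'(\tau)\,d\tau$; $D^{\alpha}_t u(x,t)$ denotes it in the variable $t$. The Wright function is $W(z,a,b)=\sum_{n\ge0}\frac{z^n}{n!\,\Gamma(an+b)}$ ($a>-1$), and the Mainardi function is $M_\nu(z)=W(-z,-\nu,1-\nu)$. *)

From Stdlib Require Import Reals Factorial.
From Coquelicot Require Import Coquelicot.
Open Scope R_scope.

(* Reciprocal Gamma function 1/Gamma(x), defined for every real x by the
   Euler--Gauss limit  1/Gamma(x) = lim_n x(x+1)...(x+n) / (n! n^x).
   It is entire and vanishes exactly at x = 0,-1,-2,... (the poles of Gamma),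
   which is the convention needed in the Wright series for negative a. *)
Fixpoint rising_prod (x : R) (n : nat) : R :=
  match n with
  | O => x
  | S p => rising_prod x p * (x + INR (S p))
  end.

Definition rgamma (x : R) : R :=
  real (Lim_seq (fun n => rising_prod x n / (INR (fact n) * Rpower (INR n) x))).

(* Euler Gamma function (used only at positive arguments). *)
Definition Gamma (x : R) : R := / rgamma x.

Definition Wright (z a b : R) : R :=
  Series (fun n => z ^ n / INR (fact n) * rgamma (a * INR n + b)).

Definition Mainardi (nu z : R) : R := Wright (- z) (- nu) (1 - nu).

(* Once Gamma(1 -+ alpha/2) > 0 is known, everything is algebra.  Writing
   G = Gamma(1 - alpha/2), W = 1 - W(-eta_t, -alpha/2, 1) and A = m/(h lam G),
   the flux constant of (P2) is q = (D - C)/(lam G (W + A)), so the right-hand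
   side of the equation for mu_t is rhsK/(W + A), which is exactly
   eta_t / M(eta_t) by the equation for eta_t; uniqueness gives mu_t = eta_t,
   and then u2 = u3 is a field identity.  Positivity of Gamma on (0, oo)
   comes from the bounds  x (1+x)^(-x) <= x prod_(j<=n) (1 + x/j) / n^x <= x e^x
   on the Euler--Gauss sequence, obtained from u/(1+u) <= ln(1+u) <= u
   by telescoping logarithms. *)

From Stdlib Require Import Reals Lra Lia Factorial.
From Coquelicot Require Import Coquelicot.
Open Scope R_scope.

Lemma exp_le_exp a b : a <= b -> exp a <= exp b.
Proof.
  intros [Hlt | ->]; [now apply Rlt_le, exp_increasing | apply Rle_refl].
Qed.

Lemma ln_le_sub_1 y : 0 < y -> ln y <= y - 1.
Proof.
  intros Hy. pose proof (exp_ineq1_le (ln y)) as H. rewrite exp_ln in H; lra.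
Qed.

Lemma ln_1p_le u : -1 < u -> ln (1 + u) <= u.
Proof. intros Hu. pose proof (ln_le_sub_1 (1 + u)); lra. Qed.

Lemma div_1p_le_ln_1p u : -1 < u -> u / (1 + u) <= ln (1 + u).
Proof.
  intros Hu.
  pose proof (ln_le_sub_1 (/ (1 + u)) ltac:(apply Rinv_0_lt_compat; lra)) as H.
  rewrite ln_Rinv in H by lra.
  replace (/ (1 + u) - 1) with (- (u / (1 + u))) in H by (field; lra).
  lra.
Qed.

Fixpoint euler_gauss_prod (x : R) (n : nat) : R :=
  match n with
  | O => 1
  | S p => euler_gauss_prod x p * (1 + x / INR (S p))
  end.

Lemma euler_gauss_prod_pos x n : 0 <= x -> 0 < euler_gauss_prod x n.
Proof.
  intros Hx. induction n as [|n IH]; cbn [euler_gauss_prod]; [lra|].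
  assert (Hxn : 0 <= x / INR (S n)) by (apply Rdiv_le_0_compat; [lra | apply lt_0_INR; lia]).
  apply Rmult_lt_0_compat; lra.
Qed.

Lemma rising_prod_eq x n : rising_prod x n = x * INR (fact n) * euler_gauss_prod x n.
Proof.
  induction n as [|n IH]; cbn [rising_prod]; cbn [euler_gauss_prod]; [simpl; ring|].
  rewrite IH, fact_simpl, mult_INR.
  assert (0 < INR (S n)) by (apply lt_0_INR; lia).
  field; lra.
Qed.

Lemma ln_euler_gauss_prod_le x n :
  0 <= x -> (1 <= n)%nat -> ln (euler_gauss_prod x n) <= x * (1 + ln (INR n)).
Proof.
  intros Hx Hn. induction Hn as [|n Hn IH].
  - simpl. rewrite Rmult_1_l, ln_1, Rdiv_1_r. pose proof (ln_1p_le x). lra.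
  - cbn [euler_gauss_prod].
    assert (Hn0 : 0 < INR n) by (apply lt_0_INR; lia).
    assert (HS : INR (S n) = INR n + 1) by apply S_INR.
    assert (Hxn : 0 <= x / INR (S n)) by (apply Rdiv_le_0_compat; lra).
    rewrite ln_mult by (try apply euler_gauss_prod_pos; lra).
    assert (Hstep : ln (1 + x / INR (S n)) <= x / INR (S n)) by (apply ln_1p_le; lra).
    (* from [u/(1+u) <= ln(1+u)] at [u = 1/n] *)
    assert (Hlog : / INR (S n) <= ln (INR (S n)) - ln (INR n)).
    { pose proof (div_1p_le_ln_1p (/ INR n) ltac:(pose proof (Rinv_0_lt_compat _ Hn0); lra)) as Hdiv.
      replace (1 + / INR n) with (INR (S n) / INR n) in Hdiv by (rewrite HS; field; lra).
      replace (/ INR n / (INR (S n) / INR n)) with (/ INR (S n)) in Hdiv by (rewrite HS; field; lra).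
      rewrite ln_div in Hdiv by lra. exact Hdiv. }
    assert (x / INR (S n) <= x * (ln (INR (S n)) - ln (INR n)))
      by (apply Rmult_le_compat_l; lra).
    lra.
Qed.

Lemma ln_euler_gauss_prod_ge x n :
  0 <= x -> x * (ln (INR n + 1 + x) - ln (1 + x)) <= ln (euler_gauss_prod x n).
Proof.
  intros Hx. induction n as [|n IH].
  - simpl. rewrite ln_1. replace (0 + 1 + x) with (1 + x) by ring. lra.
  - cbn [euler_gauss_prod].
    pose proof (pos_INR n) as Hn.
    assert (HS : INR (S n) = INR n + 1) by apply S_INR.
    assert (Hxn : 0 <= x / INR (S n)) by (rewrite HS; apply Rdiv_le_0_compat; lra).
    rewrite ln_mult by (try apply euler_gauss_prod_pos; lra).
    assert (Hstep : x / (INR n + 1 + x) <= ln (1 + x / INR (S n))).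
    { replace (x / (INR n + 1 + x)) with (x / INR (S n) / (1 + x / INR (S n)))
        by (rewrite HS; field; lra).
      apply div_1p_le_ln_1p; lra. }
    (* from [ln(1+u) <= u] at [u = 1/(n+1+x)] *)
    assert (Hlog : ln (INR (S n) + 1 + x) - ln (INR n + 1 + x) <= / (INR n + 1 + x)).
    { pose proof (ln_1p_le (/ (INR n + 1 + x))
        ltac:(pose proof (Rinv_0_lt_compat (INR n + 1 + x) ltac:(lra)); lra)) as Hln1p.
      replace (1 + / (INR n + 1 + x)) with ((INR (S n) + 1 + x) / (INR n + 1 + x)) in Hln1p
        by (rewrite HS; field; lra).
      rewrite ln_div in Hln1p by (rewrite ?HS; lra). exact Hln1p. }
    assert (x * (ln (INR (S n) + 1 + x) - ln (INR n + 1 + x)) <= x / (INR n + 1 + x))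
      by (apply Rmult_le_compat_l; lra).
    lra.
Qed.

Lemma euler_gauss_term_bounds x n : 0 < x -> (1 <= n)%nat ->
  x * exp (- (x * ln (1 + x))) <= rising_prod x n / (INR (fact n) * Rpower (INR n) x)
  <= x * exp x.
Proof.
  intros Hx Hn.
  assert (Hn0 : 0 < INR n) by (apply lt_0_INR; lia).
  assert (Hf : 0 < INR (fact n)) by apply INR_fact_lt_0.
  pose proof (euler_gauss_prod_pos x n ltac:(lra)) as Hp.
  replace (rising_prod x n / (INR (fact n) * Rpower (INR n) x))
    with (x * exp (ln (euler_gauss_prod x n) - x * ln (INR n))).
  2:{ rewrite rising_prod_eq. unfold Rpower, Rminus.
      rewrite exp_plus, exp_Ropp, exp_ln by lra.
      pose proof (exp_pos (x * ln (INR n))). field. lra. }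
  pose proof (ln_euler_gauss_prod_le x n ltac:(lra) Hn).
  pose proof (ln_euler_gauss_prod_ge x n ltac:(lra)).
  assert (x * ln (INR n) <= x * ln (INR n + 1 + x))
    by (apply Rmult_le_compat_l; [lra | apply ln_le; lra]).
  split; apply Rmult_le_compat_l; try lra; apply exp_le_exp; lra.
Qed.

Lemma rgamma_pos x : 0 < x -> 0 < rgamma x.
Proof.
  intros Hx. unfold rgamma.
  set (a := fun n => rising_prod x n / (INR (fact n) * Rpower (INR n) x)).
  assert (Hlo : Rbar_le (Lim_seq (fun _ => x * exp (- (x * ln (1 + x))))) (Lim_seq a)).
  { apply Lim_seq_le_loc. exists 1%nat. intros n Hn. apply (euler_gauss_term_bounds x n Hx Hn). }
  assert (Hhi : Rbar_le (Lim_seq a) (Lim_seq (fun _ => x * exp x))).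
  { apply Lim_seq_le_loc. exists 1%nat. intros n Hn. apply (euler_gauss_term_bounds x n Hx Hn). }
  (* [real] sends [p_infty] to the junk value 0, hence the upper bound. *)
  rewrite Lim_seq_const in Hlo, Hhi.
  pose proof (exp_pos (- (x * ln (1 + x)))).
  destruct (Lim_seq a) as [r | |]; simpl in *; try contradiction.
  nra.
Qed.

Lemma Gamma_pos x : 0 < x -> 0 < Gamma x.
Proof. intros Hx. apply Rinv_0_lt_compat, rgamma_pos, Hx. Qed.

Lemma flux_coefficient_eq (h lam G W m : R) :
  0 < h -> 0 < lam -> 0 < G -> W + m / (h * lam * G) <> 0 ->
  h / (m + h * lam * G * W) = / (lam * G * (W + m / (h * lam * G))).
Proof.
  intros Hh Hlam HG HWA.
  assert (Hden : m + h * lam * G * W = h * (lam * G * (W + m / (h * lam * G))))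
    by (field; lra).
  rewrite Hden. set (S := W + m / (h * lam * G)) in *. clearbody S. field. repeat split; lra.
Qed.

Theorem mainTheorem3 (alpha lam k m h C D eta_t mu_t : R)
  (Halpha : 0 < alpha < 1) (Hlam : 0 < lam) (Hk : 0 < k) (Hm : 0 < m)
  (Hh : 0 < h) (HCD : C < D) (HD : 0 < D) :
  let nu := alpha / 2 in
  let K := fun eta : R =>
    eta * (1 - Wright (- eta) (- nu) 1 + m / (h * lam * Gamma (1 - nu)))
        * / Mainardi nu eta in
  let rhsK := k / lam ^ 2 * (Gamma (1 - nu) / Gamma (1 + nu)) * (D - C) in
  0 < eta_t -> K eta_t = rhsK ->
  (forall e : R, 0 < e -> K e = rhsK -> e = eta_t) ->
  let q := (D - C) * h /
           (m + h * lam * Gamma (1 - nu) * (1 - Wright (- eta_t) (- nu) 1)) in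
  let rhsM := k * q / lam * (Gamma (1 - nu) ^ 2 / Gamma (1 + nu)) in
  0 < mu_t -> mu_t / Mainardi nu mu_t = rhsM ->
  (forall e : R, 0 < e -> e / Mainardi nu e = rhsM -> e = mu_t) ->
  let u2 := fun x t : R =>
    C + q * lam * Gamma (1 - nu) * (1 - Wright (- mu_t) (- nu) 1)
      - q * lam * Gamma (1 - nu)
        * (1 - Wright (- (x / (lam * Rpower t nu))) (- nu) 1) in
  let s2 := fun t : R => lam * mu_t * Rpower t nu in
  let u3 := fun x t : R =>
    D - (D - C) * (1 - Wright (- (x / (lam * Rpower t nu))) (- nu) 1
                   + m / (h * lam * Gamma (1 - nu)))
        / (1 - Wright (- eta_t) (- nu) 1 + m / (h * lam * Gamma (1 - nu))) in
  let s3 := fun t : R => lam * eta_t * Rpower t nu in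
  mu_t = eta_t /\
  (forall t : R, 0 < t -> s2 t = s3 t) /\
  (forall x t : R, 0 < t -> u2 x t = u3 x t).
Proof.
  intros nu K rhsK Heta HK _ q rhsM _ _ Hmu_unique u2 s2 u3 s3.
  assert (HG : 0 < Gamma (1 - nu)) by (apply Gamma_pos; unfold nu; lra).
  assert (HGp : 0 < Gamma (1 + nu)) by (apply Gamma_pos; unfold nu; lra).
  set (G := Gamma (1 - nu)) in *.
  set (W := 1 - Wright (- eta_t) (- nu) 1) in *.
  set (A := m / (h * lam * G)) in *.
  set (M := Mainardi nu eta_t) in *.
  assert (HrhsK : 0 < rhsK).
  { unfold rhsK. apply Rmult_lt_0_compat; [|lra].
    apply Rmult_lt_0_compat; apply Rdiv_lt_0_compat; try apply pow_lt; lra. }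
  change (eta_t * (W + A) * / M = rhsK) in HK.
  (* [K eta_t = rhsK > 0] rules out the degenerate denominators. *)
  assert (HWA : W + A <> 0) by (intros E; rewrite E, Rmult_0_r, Rmult_0_l in HK; lra).
  assert (HM : M <> 0) by (intros E; rewrite E, Rinv_0, Rmult_0_r in HK; lra).
  assert (Hq : q = (D - C) / (lam * G * (W + A))).
  { unfold q, Rdiv. rewrite Rmult_assoc. fold (Rdiv h (m + h * lam * G * W)).
    rewrite flux_coefficient_eq by assumption. reflexivity. }
  assert (Hmu : mu_t = eta_t).
  { symmetry. apply Hmu_unique; [exact Heta |].
    change (eta_t / M = rhsM).
    replace (eta_t / M) with (rhsK / (W + A)) by (rewrite <- HK; field; auto).
    unfold rhsM, rhsK. rewrite Hq. field. repeat split; lra. }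
  split; [exact Hmu | split].
  - intros t _. unfold s2, s3. rewrite Hmu. reflexivity.
  - intros x t _. unfold u2, u3. rewrite Hmu, Hq. fold W A. field. repeat split; lra.
Qed.
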